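(* If $A=(A_n)_{n=0}^\infty$ is an Appell sequence, then for $n\geq0$, \[ \varphi_A(e_n)=\frac{A_{(1^n)}}{n!}. \]
   Context: An Appell sequence is a sequence of polynomials $(A_n)_{n\ge0}$ with $A_0=1$ and $A_n'=nA_{n-1}$ for $n\ge1$. For a partition $\lambda$ of length $r$, let $(n_1,\dots,n_r)=(\lambda_r,\lambda_{r-1}+1,\dots,\lambda_1+r-1)$ and $A_\lambda=\operatorname{Wr}[A_{n_1},\dots,A_{n_r}]/\Delta(n_1,\dots,n_r)$, where $\operatorname{Wr}$ is the Wronskian and $\Delta$ the Vandermonde determinant $\prod_{i<j}(x_j-x_i)$. $(1^n)=(1,1,\dots,1)$ ($n$ ones). $e_n$ is the elementary symmetric function and $\varphi_A$ is the ring homomorphism from the ring of symmetric functions to $\mathbb{R}[x]$ with $\varphi_A(h_m)=A_m/m!$, $h_m$ the complete homogeneous symmetric functions. *)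

From HB Require Import structures.
From mathcomp Require Import all_boot all_order all_algebra.
From mathcomp Require Import mpoly.
Set Implicit Arguments. Unset Strict Implicit. Unset Printing Implicit Defensive.
Import Order.TTheory GRing.Theory Num.Theory.
Local Open Scope ring_scope.

Definition appell (R : ringType) (A : nat -> {poly R}) : Prop :=
  A 0%N = 1 /\ forall n : nat, (A n.+1)^`() = n.+1%:R *: A n.

Definition wronskian (R : comRingType) (fs : seq {poly R}) : {poly R} :=
  \det (\matrix_(i < size fs, j < size fs) (nth 0 fs j)^`(i)).

Definition vandermonde (R : ringType) (ns : seq nat) : R :=
  \prod_(j < size ns) \prod_(i < j) ((nth 0%N ns j)%:R - (nth 0%N ns i)%:R).

Definition is_partition (la : seq nat) : bool :=
  sorted geq la && all (fun k => 0 < k)%N la.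

(* (n_1, ..., n_r) = (lambda_r, lambda_{r-1} + 1, ..., lambda_1 + r - 1);
   0-indexed: n_i = lambda_{r-1-i} (0-indexed) + i. *)
Definition partition_degrees (la : seq nat) : seq nat :=
  [seq (nth 0%N la (size la - 1 - i) + i)%N | i <- iota 0 (size la)].

Definition appell_schur (R : fieldType) (A : nat -> {poly R}) (la : seq nat)
  : {poly R} :=
  let ns := partition_degrees la in
  (vandermonde R ns)^-1 *: wronskian [seq A k | k <- ns].

Definition ones (n : nat) : seq nat := nseq n 1%N.

Definition hsym (R : ringType) (N d : nat) : {mpoly R[N]} :=
  \sum_(m : 'X_{1..N < d.+1} | mdeg m == d) 'X_[m].

Definition htuple (R : ringType) (N : nat) : N.-tuple {mpoly R[N]} :=
  [tuple hsym R N i.+1 | i < N].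

(* Image under phi_A of a polynomial expression P(h_1, ..., h_N):
   phi_A(P(h_1,...,h_N)) = P(A_1/1!, ..., A_N/N!). *)
Definition phiA_expr (R : fieldType) (A : nat -> {poly R}) (N : nat)
  (P : {mpoly R[N]}) : {poly R} :=
  mmap (fun c : R => c%:P) (fun i : 'I_N => ((i.+1)`!%:R)^-1 *: A i.+1) P.

From HB Require Import structures.
From mathcomp Require Import all_boot all_order all_algebra.
From mathcomp Require Import mpoly.
Set Implicit Arguments. Unset Strict Implicit. Unset Printing Implicit Defensive.
Import Order.TTheory GRing.Theory Num.Theory.
Local Open Scope ring_scope.

(* Put a_k = A_k / k!.  The Appell relation gives A_m^(i) = m! a_(m-i), so after
   taking the factor (j+1)! out of column j and dividing by
   Delta(1, ..., n) = prod_(j<n) j!, the quantity A_(1^n) / n! becomes the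
   Hessenberg determinant det (a_(j+1-i)).  That determinant is q_n, where
   sum_k (-1)^k a_k q_(m-k) = 0 for m > 0 (read it off the inverse of the
   unitriangular Toeplitz matrix (a_(i-j))).  Newton's identity
   sum_k (-1)^k e_k h_(m-k) = 0 says that e_n is obtained from h_1, ..., h_n by
   the same recursion, and h_1, ..., h_n are algebraically independent, so P is
   this universal expression and phi_A maps it to q_n. *)

Section AlternatingInverse.
Variable T : comNzRingType.
Implicit Types (c d : nat -> T).

Definition alt_conv c d m := \sum_(k < m.+1) (-1) ^+ k * c k * d (m - k)%N.

Fixpoint altinv_upto c (m : nat) : nat -> T :=
  if m is m'.+1 then fun i => if (i <= m')%N then altinv_upto c m' i
    else \sum_(k < m'.+1) (-1) ^+ k * c k.+1 * altinv_upto c m' (m' - k)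
  else fun=> 1.

(* For c 0 = 1, altinv c is the coefficient sequence of 1 / C(-t), where
   C(t) = sum_k c k t^k; the value c 0 itself is never read. *)
Definition altinv c m := altinv_upto c m m.

Lemma altinv_uptoE c m i : (i <= m)%N -> altinv_upto c m i = altinv c i.
Proof.
elim: m => [|m IHm]; first by rewrite leqn0 => /eqP ->.
rewrite leq_eqVlt => /predU1P [-> //|]; rewrite ltnS => lt_im /=.
by rewrite lt_im IHm.
Qed.

Lemma altinvS c m :
  altinv c m.+1 = \sum_(k < m.+1) (-1) ^+ k * c k.+1 * altinv c (m - k).
Proof.
by rewrite /altinv /= ltnn; apply: eq_bigr => k _; rewrite altinv_uptoE ?leq_subr.
Qed.

Lemma eq_altinv c c' M : (forall k, (0 < k <= M)%N -> c k = c' k) ->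
  forall m, (m <= M)%N -> altinv c m = altinv c' m.
Proof.
move=> eq_cc'; elim/ltn_ind=> [[//|m] IHm] le_mM; rewrite !altinvS.
apply: eq_bigr => k _; rewrite eq_cc' ?IHm ?ltnS ?leq_subr //.
  exact: leq_trans (leq_subr _ _) (ltnW le_mM).
by rewrite /= (leq_trans _ le_mM).
Qed.

Lemma alt_conv_sym c d m : alt_conv c d m = (-1) ^+ m * alt_conv d c m.
Proof.
rewrite /alt_conv mulr_sumr (reindex_inj rev_ord_inj) /=; apply: eq_bigr => k _.
have le_km : (k <= m)%N by rewrite -ltnS.
rewrite subSS subKn // -signr_odd oddB // signr_addb !signr_odd.
by rewrite -!mulrA [d k * _]mulrC.
Qed.

Lemma alt_conv_altinv c m : c 0%N = 1 -> (0 < m)%N -> alt_conv c (altinv c) m = 0.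
Proof.
move=> c0; case: m => // m _; rewrite /alt_conv big_ord_recl c0 subn0 !mul1r altinvS.
rewrite -big_split big1 // => k _.
by rewrite lift0 subSS exprS !mulN1r !mulNr; apply: subrr.
Qed.

Lemma altinv_unique c d : c 0%N = 1 -> d 0%N = 1 ->
  (forall m, (0 < m)%N -> alt_conv c d m = 0) -> d =1 altinv c.
Proof.
move=> c0 d0 cd0; elim/ltn_ind=> [[//|m] IHm].
apply/eqP; have /eqP := cd0 m.+1 isT.
rewrite /alt_conv big_ord_recl c0 subn0 !mul1r addr_eq0 altinvS -sumrN.
move/eqP->; apply/eqP/eq_bigr => k _.
by rewrite lift0 subSS IHm ?ltnS ?leq_subr // exprS !mulN1r !mulNr opprK.
Qed.

Lemma altinvK c : c 0%N = 1 -> altinv (altinv c) =1 c.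
Proof.
move=> c0 m; symmetry; apply: altinv_unique => // {}m m_gt0.
by rewrite alt_conv_sym alt_conv_altinv ?mulr0.
Qed.

End AlternatingInverse.

Lemma rmorph_altinv (T U : comNzRingType) (f : {rmorphism T -> U}) (c : nat -> T) m :
  f (altinv c m) = altinv (f \o c) m.
Proof.
elim/ltn_ind: m => [[|m] IHm]; first by rewrite rmorph1.
rewrite !altinvS rmorph_sum; apply: eq_bigr => k _.
by rewrite !rmorphM rmorphXn rmorphN1 IHm // ltnS leq_subr.
Qed.

Section Toeplitz.
Variable T : comNzRingType.
Implicit Types (c d : nat -> T).

Definition toeplitz_lt n c : 'M[T]_n :=
  \matrix_(i, j) if (j <= i)%N then c (i - j)%N else 0.

Definition hessenberg n c : 'M[T]_n :=
  \matrix_(i, j) if (i <= j.+1)%N then c (j.+1 - i)%N else 0.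

Lemma mul_toeplitz_lt n c d : toeplitz_lt n c *m toeplitz_lt n d =
  toeplitz_lt n (fun m => \sum_(k < m.+1) c (m - k)%N * d k).
Proof.
apply/matrixP => i j; rewrite !mxE.
pose G k := (if (k <= i)%N then c (i - k)%N else 0) *
  (if (j <= k)%N then d (k - j)%N else 0).
rewrite (eq_bigr (fun k : 'I_n => G k)); last by move=> k _; rewrite !mxE.
rewrite -(big_mkord xpredT G); have [le_ji|lt_ij] := leqP j i; last first.
  rewrite big1_seq // => k _; rewrite /G; case: leqP => [le_ki|]; last by rewrite mul0r.
  by rewrite leqNgt (leq_ltn_trans le_ki lt_ij) mulr0.
have le_i1n : (i.+1 <= n)%N := ltn_ord i.
rewrite (big_cat_nat (n := j)) //=; last exact: leq_trans le_ji (ltnW le_i1n).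
rewrite big_nat_cond big1 ?add0r; last first.
  by move=> k /andP [/andP [_ lt_kj] _]; rewrite /G [(j <= k)%N]leqNgt lt_kj mulr0.
rewrite (big_cat_nat (n := i.+1)) ?leqW //= [X in _ + X]big_nat_cond.
rewrite [X in _ + X]big1 ?addr0; last first.
  by move=> k /andP [/andP [lt_ik _] _]; rewrite /G [(k <= i)%N]leqNgt lt_ik mul0r.
rewrite (@big_addn _ _ _ 0 i.+1 j) subSn // big_mkord; apply: eq_bigr => l _.
have le_l : (l <= i - j)%N := ltn_ord l.
by rewrite /G leq_addl addnK addnC -leq_subRL // le_l subnDA.
Qed.

Lemma det_toeplitz_lt n c : c 0%N = 1 -> \det (toeplitz_lt n c) = 1.
Proof.
move=> c0; rewrite det_trig; last first.
  by apply/is_trig_mxP => i j lt_ij; rewrite mxE leqNgt lt_ij.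
by rewrite big1 // => i _; rewrite mxE leqnn subnn.
Qed.

Lemma conv_signed_altinv c m : c 0%N = 1 ->
  \sum_(k < m.+1) c (m - k)%N * ((-1) ^+ k * altinv c k) = (m == 0)%:R.
Proof.
case: m => [|m] c0; first by rewrite big_ord1 c0 !mul1r.
transitivity (alt_conv (altinv c) c m.+1).
  by apply: eq_bigr => k _; rewrite mulrC.
by rewrite alt_conv_sym alt_conv_altinv ?mulr0.
Qed.

Lemma mul_toeplitz_lt_altinv n c : c 0%N = 1 ->
  toeplitz_lt n c *m toeplitz_lt n (fun m => (-1) ^+ m * altinv c m) = 1%:M.
Proof.
move=> c0; rewrite mul_toeplitz_lt; apply/matrixP => i j.
rewrite !mxE conv_signed_altinv // -val_eqE /=.
by case: ltngtP => [lt_ji|//|->]; rewrite ?subnn // subn_eq0 leqNgt lt_ji.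
Qed.

Lemma det_hessenberg n c : c 0%N = 1 -> \det (hessenberg n c) = altinv c n.
Proof.
(* hessenberg n c is the transposed (0, n) minor of H, whose inverse is known. *)
move=> c0; set H := toeplitz_lt n.+1 c.
have adjH : \adj H = toeplitz_lt n.+1 (fun m => (-1) ^+ m * altinv c m).
  rewrite -[\adj H]mulmx1 -(mul_toeplitz_lt_altinv n.+1 c0) mulmxA mul_adj_mx.
  by rewrite det_toeplitz_lt // mul1mx.
have hessE : hessenberg n c = (row' ord0 (col' ord_max H))^T.
  by apply/matrixP => i j; rewrite !mxE /= /bump [(n <= i)%N]leqNgt ltn_ord.
have := congr1 (fun M : 'M_n.+1 => M ord_max ord0) adjH.
rewrite /= !mxE /cofactor /= subn0 add0n -det_tr -hessE.
move=> /(congr1 (GRing.mul ((-1) ^+ n))).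
by rewrite !mulrA -exprMn mulrNN mulr1 expr1n !mul1r.
Qed.

End Toeplitz.

Lemma sum_signed_binomial (T : nzRingType) t m : (0 < t <= m)%N ->
  \sum_(k < m.+1) (-1) ^+ k * 'C(t, k)%:R = 0 :> T.
Proof.
case/andP=> t_gt0 le_tm; rewrite -(big_mkord xpredT (fun k => (-1) ^+ k * 'C(t, k)%:R)).
rewrite (big_cat_nat (n := t.+1)) //= [X in _ + X]big_nat_cond [X in _ + X]big1 ?addr0.
  have := exprBn_comm t (commr_refl (1 : T)).
  rewrite subrr expr0n eqn0Ngt t_gt0 big_mkord /= => sum_eq0; rewrite [RHS]sum_eq0.
  by apply: eq_bigr => k _; rewrite !expr1n !mulr1 mulr_natr.
by move=> k /andP [/andP [lt_tk _] _]; rewrite bin_small // mulr0.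
Qed.

Section CompleteHomogeneous.
Variables (R : comNzRingType) (N : nat).

Lemma mcoeff_hsymMX d (nu mu : 'X_{1..N}) :
  (hsym R N d * 'X_[nu])@_mu = ((nu <= mu)%MM && (mdeg (mu - nu) == d))%:R.
Proof.
rewrite /hsym mulr_suml raddf_sum /=.
under eq_bigr => m _ do rewrite -mpolyXD mcoeffX.
case: (boolP ((nu <= mu)%MM && _)) => [/andP [le_numu /eqP deg_d]|].
  have lt_deg : (mdeg (mu - nu) < d.+1)%N by rewrite deg_d.
  rewrite (bigD1 (BMultinom lt_deg)) /= ?deg_d // submK // eqxx big1 ?addr0 //.
  move=> m /andP [_ neq_m]; case: eqP => // eq_mu; case/eqP: neq_m.
  by apply/val_inj; rewrite /= -eq_mu addmK.
move=> Nmu; rewrite big1 // => m /eqP deg_m; case: eqP => // eq_mu.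
by case/negP: Nmu; rewrite -eq_mu lem_addl addmK deg_m /=.
Qed.

Lemma hsym0 : hsym R N 0 = 1.
Proof.
apply/mpolyP => mu; rewrite mcoeff1 -[hsym R N 0]mulr1 -mpolyX0 mcoeff_hsymMX.
have -> : (0 <= mu)%MM by apply/mnm_lepP => i; rewrite mnm0E.
by rewrite subm0 mdeg_eq0.
Qed.

Lemma lem_mesym1 (S : {set 'I_N}) (mu : 'X_{1..N}) :
  (mesym1 S <= mu)%MM = (S \subset [set i | 0 < mu i]%N).
Proof.
apply/mnm_lepP/subsetP => [le_Smu i iS|sub_S i]; rewrite ?mnmE.
  by have := le_Smu i; rewrite mnmE iS inE.
by case: (boolP (i \in S)) => // /sub_S; rewrite inE.
Qed.

Lemma mcoeff_mesymM_hsym k m (mu : 'X_{1..N}) : (k <= m)%N ->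
  (mesym N R k * hsym R N (m - k))@_mu =
  (mdeg mu == m)%:R * 'C(#|[set i | 0 < mu i]%N|, k)%:R.
Proof.
move=> le_km; rewrite mesymE mulr_suml raddf_sum /= -cards_draws -sum1_card.
rewrite natr_sum mulr_sumr big_mkcond [RHS]big_mkcond /=; apply: eq_bigr => S _.
rewrite inE; case: (boolP (#|S| == k)) => [/eqP card_S|]; rewrite ?andbF //.
rewrite andbT mulrC mcoeff_hsymMX lem_mesym1 mulr1.
case: (boolP (S \subset _)) => //= sub_S; congr (nat_of_bool _)%:R.
have le_Smu : (mesym1 S <= mu)%MM by rewrite lem_mesym1.
have := congr1 mdeg (submK le_Smu).
rewrite mdegD mdeg_mesym1 card_S => <-.
by rewrite -{2}(subnK le_km) eqn_add2r.
Qed.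

Lemma alt_conv_mesym_hsym m : (0 < m)%N -> alt_conv (mesym N R) (hsym R N) m = 0.
Proof.
move=> m_gt0; apply/mpolyP => mu; rewrite mcoeff0 raddf_sum /=.
have signC j : (-1) ^+ j = ((-1) ^+ j)%:MP :> {mpoly R[N]} by rewrite rmorphXn rmorphN1.
have [deg_mu|] := eqVneq (mdeg mu) m; last first.
  move=> Ndeg; rewrite big1 // => k _; have le_km : (k <= m)%N by rewrite -ltnS.
  by rewrite -mulrA signC mcoeffCM (mcoeff_mesymM_hsym _ le_km) (negbTE Ndeg) mul0r mulr0.
rewrite -[RHS](sum_signed_binomial R (t := #|[set i | 0 < mu i]%N|) (m := m)).
  apply: eq_bigr => k _; have le_km : (k <= m)%N by rewrite -ltnS.
  by rewrite -mulrA signC mcoeffCM (mcoeff_mesymM_hsym _ le_km) deg_mu eqxx mul1r.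
apply/andP; split.
  rewrite card_gt0; apply: contraTneq m_gt0 => /setP empty.
  rewrite -deg_mu mdegE big1 // => i _; apply/eqP.
  by have := empty i; rewrite !inE lt0n => /negbT; rewrite negbK.
rewrite -deg_mu mdegE -sum1_card big_mkcond /=; apply: leq_sum => i _.
by rewrite inE; case: (mu i).
Qed.

Lemma hsym_altinv m : hsym R N m = altinv (mesym N R) m.
Proof. exact: altinv_unique (mesym0E _ _) (hsym0) alt_conv_mesym_hsym m. Qed.

Lemma mesym_altinv m : mesym N R m = altinv (hsym R N) m.
Proof.
rewrite -(altinvK (mesym0E N R) m); apply: eq_altinv (leqnn m) => k _.
by rewrite hsym_altinv.
Qed.

End CompleteHomogeneous.

Lemma comp_mpolyA (R : comNzRingType) n k l (p : {mpoly R[n]})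
  (lq : n.-tuple {mpoly R[k]}) (lr : k.-tuple {mpoly R[l]}) :
  (p \mPo lq) \mPo lr = p \mPo [tuple tnth lq i \mPo lr | i < n].
Proof.
rewrite [p \mPo lq]comp_mpolyEX [RHS]comp_mpolyEX raddf_sum /=.
apply: eq_bigr => m _; rewrite comp_mpolyZ; congr (_ *: _).
rewrite !comp_mpolyX rmorph_prod /=; apply: eq_bigr => i _.
by rewrite rmorphXn tnth_mktuple.
Qed.

Section HVariables.
Variables (R : comNzRingType) (n : nat).

(* A polynomial in {mpoly R[n]} is read as a polynomial in h_1, ..., h_n, with
   'X_i standing for h_(i+1); hvar k is h_k for k <= n (h_0 = 1) and 0 beyond. *)
Definition hvar k : {mpoly R[n]} :=
  if k is k'.+1 then oapp (fun i : 'I_n => 'X_i) 0 (insub k') else 1.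

Lemma hvarS (i : 'I_n) : hvar i.+1 = 'X_i.
Proof. by rewrite /= valK. Qed.

Lemma rmorph_hvar (S : nzRingType) (f : {rmorphism {mpoly R[n]} -> S})
    (g : nat -> S) k :
  g 0%N = 1 -> (forall i : 'I_n, f 'X_i = g i.+1) ->
  f (hvar k) = if (k <= n)%N then g k else 0.
Proof.
case: k => [|k] g0 fX /=; first by rewrite rmorph1.
by case: insubP => [i -> <-|/negbTE -> /=]; rewrite ?fX ?rmorph0.
Qed.

Lemma hvar_mPo l (F : nat -> {mpoly R[l]}) k : F 0%N = 1 ->
  hvar k \mPo [tuple F i.+1 | i < n] = if (k <= n)%N then F k else 0.
Proof.
move=> F0; apply: (rmorph_hvar (f := comp_mpoly _)) => // i.
by apply: (etrans (comp_mpolyXU _ _)); rewrite -tnth_nth tnth_mktuple.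
Qed.

Lemma hvar_mPo_mesym k : hvar k \mPo [tuple mesym n R i.+1 | i < n] = mesym n R k.
Proof. by rewrite hvar_mPo ?mesym0E //; case: leqP => // /mesym_geqnE ->. Qed.

Lemma altinv_hvar_mPo_mesym m :
  altinv hvar m \mPo [tuple mesym n R i.+1 | i < n] = hsym R n m.
Proof.
rewrite (rmorph_altinv (comp_mpoly _)) hsym_altinv.
by apply: eq_altinv (leqnn m) => k _; apply: hvar_mPo_mesym.
Qed.

Lemma altinv_hvar_mPo_hsym m : (m <= n)%N -> altinv hvar m \mPo htuple R n = mesym n R m.
Proof.
move=> le_mn; rewrite (rmorph_altinv (comp_mpoly _)) mesym_altinv.
apply: eq_altinv (leqnn m) => k /andP [_ le_km].
by rewrite /= hvar_mPo ?hsym0 ?(leq_trans le_km le_mn).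
Qed.

Definition hvar_altinv_tuple := [tuple altinv hvar i.+1 | i < n].

Lemma altinv_hvar_mPo_altinv m : (m <= n)%N ->
  altinv hvar m \mPo hvar_altinv_tuple = hvar m.
Proof.
move=> le_mn; rewrite (rmorph_altinv (comp_mpoly _)) -(altinvK (c := hvar) erefl m).
apply: eq_altinv (leqnn m) => k /andP [_ le_km].
by rewrite /= hvar_mPo ?(leq_trans le_km le_mn).
Qed.

Lemma hvar_altinv_tupleK :
  [tuple tnth hvar_altinv_tuple i \mPo hvar_altinv_tuple | i < n] = [tuple 'X_i | i < n].
Proof.
by apply: eq_from_tnth => i; rewrite !tnth_mktuple altinv_hvar_mPo_altinv ?hvarS.
Qed.

Lemma mPo_htuple_mesymn (P : {mpoly R[n]}) :
  P \mPo htuple R n = mesym n R n -> P = altinv hvar n.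
Proof.
(* Substituting hvar_altinv_tuple is an involution that turns the h's into the
   e's, so uniqueness of expressions in the e's carries over to the h's. *)
move=> P_hsym; have P_alt : P \mPo hvar_altinv_tuple = hvar n.
  apply: msym_fundamental_un; rewrite comp_mpolyA hvar_mPo_mesym -P_hsym.
  congr (P \mPo _); apply: eq_from_tnth => i.
  by rewrite !tnth_mktuple altinv_hvar_mPo_mesym.
by rewrite -[P]comp_mpoly_id -hvar_altinv_tupleK -comp_mpolyA P_alt hvar_mPo ?leqnn.
Qed.

End HVariables.

Lemma appell_derivn (R : nzRingType) (A : nat -> {poly R}) : appell A ->
  forall m i, (A m)^`(i) = if (i <= m)%N then (m ^_ i)%:R *: A (m - i)%N else 0.
Proof.
move=> [A0 AS] m; elim=> [|i IHi]; first by rewrite derivn0 ffactn0 scale1r subn0.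
rewrite derivnS IHi; case: (ltngtP i m) => [lt_im|lt_mi|->]; last 2 first.
- by rewrite raddf0.
- by rewrite subnn A0 derivZ -polyC1 derivC scaler0.
by rewrite derivZ -(subnSK lt_im) AS scalerA -natrM ffactnSr subnSK.
Qed.

Lemma partition_degrees_ones n : partition_degrees (ones n) = iota 1 n.
Proof.
apply: (@eq_from_nth _ 0%N); first by rewrite size_map !size_iota size_nseq.
rewrite size_map size_iota size_nseq => j lt_jn.
rewrite (nth_map 0%N) ?size_iota ?size_nseq // !nth_iota // nth_nseq add0n.
by rewrite -subnDA ltn_subrL add1n /= (leq_ltn_trans _ lt_jn).
Qed.

Lemma prod_natrB_fact (R : nzRingType) j :
  \prod_(i < j) ((j.+1)%:R - (i.+1)%:R : R) = j`!%:R.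
Proof.
rewrite (eq_bigr (fun i : 'I_j => (j - i)%N%:R)); last first.
  by move=> i _; rewrite -natrB ?subSS // ltnS ltnW.
rewrite -natr_prod (reindex_inj rev_ord_inj) /= fact_prod big_add1 /= big_mkord.
by congr _%:R; apply: eq_bigr => i _; rewrite subKn.
Qed.

Lemma vandermonde_iota1 (R : nzRingType) n :
  vandermonde R (iota 1 n) = (\prod_(j < n) j`!)%:R.
Proof.
rewrite /vandermonde size_iota natr_prod; apply: eq_bigr => j _.
rewrite nth_iota // add1n -prod_natrB_fact; apply: eq_bigr => i _.
by rewrite nth_iota ?add1n // (ltn_trans (ltn_ord i)).
Qed.

Lemma prod_fact_succ n : (\prod_(j < n) j.+1`! = n`! * \prod_(j < n) j`!)%N.
Proof.
elim: n => [|n IHn]; first by rewrite !big_ord0.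
by rewrite !big_ord_recr /= IHn factS mulnCA !mulnA.
Qed.

Section AppellWronskian.
Variables (R : numFieldType) (A : nat -> {poly R}).
Hypothesis appellA : appell A.

Definition phiA_hsym k : {poly R} := (k`!%:R)^-1 *: A k.

Lemma phiA_hsym0 : phiA_hsym 0 = 1.
Proof. by rewrite /phiA_hsym invr1 scale1r; case: appellA. Qed.

Lemma natr_fact_neq0 k : k`!%:R != 0 :> R.
Proof. by rewrite pnatr_eq0 -lt0n fact_gt0. Qed.

Lemma derivn_appell m i :
  (A m)^`(i) = if (i <= m)%N then m`!%:R *: phiA_hsym (m - i) else 0.
Proof.
rewrite appell_derivn //; case: ifP => // le_im.
by rewrite /phiA_hsym scalerA -(ffact_fact le_im) natrM mulfK ?natr_fact_neq0.
Qed.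

Lemma wronskian_appell_iota1 n : wronskian [seq A k | k <- iota 1 n] =
  (\prod_(j < n) j.+1`!)%:R *: \det (hessenberg n phiA_hsym).
Proof.
rewrite /wronskian size_map size_iota.
have -> : \matrix_(i < n, j < n) (nth 0 [seq A k | k <- iota 1 n] j)^`(i) =
    hessenberg n phiA_hsym *m diag_mx (\row_(j < n) (j.+1`!%:R)%:P).
  apply/matrixP => i j; rewrite mul_mx_diag !mxE (nth_map 0%N) ?size_iota //.
  rewrite nth_iota // add1n derivn_appell; case: ifP => _; last by rewrite mul0r.
  by rewrite mulrC mul_polyC.
rewrite det_mulmx det_diag mulrC (eq_bigr (fun j : 'I_n => (j.+1`!%:R)%:P)).
  by rewrite -rmorph_prod -natr_prod mul_polyC.
by move=> j _; rewrite mxE.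
Qed.

Lemma appell_schur_ones n :
  (n`!%:R)^-1 *: appell_schur A (ones n) = \det (hessenberg n phiA_hsym).
Proof.
rewrite /appell_schur partition_degrees_ones vandermonde_iota1 wronskian_appell_iota1.
rewrite !scalerA prod_fact_succ natrM -mulrA mulrCA mulKf ?natr_fact_neq0 //.
rewrite mulVf ?scale1r //.
by rewrite pnatr_eq0 -lt0n prodn_gt0 // => j; apply: fact_gt0.
Qed.

End AppellWronskian.

Theorem corollary4p2 (R : realFieldType) (A : nat -> {poly R}) :
  appell A ->
  forall (n : nat) (P : {mpoly R[n]}),
    P \mPo htuple R n = mesym n R n ->
    phiA_expr A P = (n`!%:R)^-1 *: appell_schur A (ones n).
Proof.
move=> appellA n P P_hsym.
rewrite appell_schur_ones // det_hessenberg ?phiA_hsym0 // (mPo_htuple_mesymn P_hsym).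
rewrite /phiA_expr (rmorph_altinv (mmap _ _)).
apply: eq_altinv (leqnn n) => k /andP [_ le_kn] /=.
rewrite (rmorph_hvar (g := phiA_hsym A)) ?le_kn ?phiA_hsym0 // => i.
by rewrite /= mmapX mmap1U.
Qed.
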